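(* Let $f \in C^1(\mathcal{T})$ and $g \in C^1([0,1])$, where $\mathcal{T}=\{(x,y)\in\mathbb{R}^2: 0\le y\le x\le 1\}$. Let $k\in C^1(\mathcal{T})$ be the solution of the Goursat problem $$k_y(x,y)+k_x(x,y)=f(x,y)-\int_y^x f(x,\eta)k(\eta,y)\,d\eta \ \ \forall (x,y)\in\mathcal{T},\qquad k(1,y)=0\ \ \forall y\in[0,1].$$ Let $l\in C^1(\mathcal{T})$ be the inverse kernel, i.e., the kernel for which the inverse of the map $w\mapsto w(x)-\int_0^x k(x,y)w(y)\,dy$ is $u\mapsto u(x)+\int_0^x l(x,y)u(y)\,dy$. Define $p_1(x)=g(x)-k(x,0)$ and $$\theta(x)=p_1(x)+\int_0^x l(x,y)p_1(y)\,dy,\qquad x\in[0,1].$$ Consider the plant $$u_t(x,t)=u_x(x,t)+g(x)u(0,t)+\int_0^x f(x,y)u(y,t)\,dy,\qquad u(1,t)=U(t),\qquad Y(t)=u(0,t),$$ with $u(\cdot,0)=u_0$, and the observer $$\hat u_t(x,t)=\hat u_x(x,t)+g(x)\hat u(0,t)+\int_0^x f(x,y)\hat u(y,t)\,dy+p_1(x)\,[u(0,t)-\hat u(0,t)],\qquad \hat u(1,t)=U(t),$$ with $\hat u(\cdot,0)=\hat u_0$. Let $U\in C^1(\mathbb{R}^+)$ and $u_0,\hat u_0\in C^1([0,1])$ satisfy $$u_0(1)=U(0),\qquad \dot U(0)=u_0'(1)+g(1)u_0(0)+\int_0^1 f(1,y)u_0(y)\,dy,$$ $$\hat u_0(1)=U(0),\qquad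 \dot U(0)=\hat u_0'(1)+g(1)\hat u_0(0)+\int_0^1 f(1,y)\hat u_0(y)\,dy+p_1(1)\,[u_0(0)-\hat u_0(0)].$$ Then the solution satisfies, for all $t\ge 1$ and all $x\in[0,1]$, $$\hat u(x,t)=\hat w(x,t)-\int_0^x k(x,y)\hat w(y,t)\,dy,$$ where $$\hat w(x,t)=\int_{t+x-1}^{t}\theta(t+x-\tau)\,Y(\tau)\,d\tau+U(t+x-1),\qquad x\in[0,1].$$
   Context: $\mathbb{R}^+=[0,\infty)$. The Goursat problem for $k$ has a unique $C^1(\mathcal{T})$ solution; the inverse kernel $l$ exists in $C^1(\mathcal{T})$. Under the stated compatibility conditions the plant and observer systems have unique classical solutions defined for all $t\ge 0$. *)

From Stdlib Require Import Reals.
From Coquelicot Require Import Coquelicot.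
Open Scope R_scope.

Definition I01 (x : R) : Prop := 0 <= x <= 1.
Definition Rpos (t : R) : Prop := 0 <= t.
Definition Tri (x y : R) : Prop := 0 <= y /\ y <= x /\ x <= 1.
Definition Quad (x t : R) : Prop := I01 x /\ Rpos t.

Definition deriv_within (D : R -> Prop) (h : R -> R) (x d : R) : Prop :=
  filterlim (fun y => (h y - h x) / (y - x))
    (within (fun y => D y /\ y <> x) (locally x)) (locally d).

Definition cont_within (D : R -> Prop) (h : R -> R) (x : R) : Prop :=
  filterlim h (within D (locally x)) (locally (h x)).

Definition C1_with (D : R -> Prop) (h h' : R -> R) : Prop :=
  forall x, D x ->
    deriv_within D h x (h' x) /\ cont_within D h x /\ cont_within D h' x.

Definition C1_on (D : R -> Prop) (h : R -> R) : Prop := exists h', C1_with D h h'.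

Definition cont2_within (D : R -> R -> Prop) (F : R -> R -> R) (x y : R) : Prop :=
  filterlim (fun p : R * R => F (fst p) (snd p))
    (within (fun p : R * R => D (fst p) (snd p)) (locally (x, y)))
    (locally (F x y)).

Definition C1_2_with (D : R -> R -> Prop) (F F1 F2 : R -> R -> R) : Prop :=
  forall x y, D x y ->
    deriv_within (fun x' => D x' y) (fun x' => F x' y) x (F1 x y) /\
    deriv_within (fun y' => D x y') (fun y' => F x y') y (F2 x y) /\
    cont2_within D F x y /\ cont2_within D F1 x y /\ cont2_within D F2 x y.

Definition C1_2 (D : R -> R -> Prop) (F : R -> R -> R) : Prop :=
  exists F1 F2, C1_2_with D F F1 F2.

Definition goursat (f k kx ky : R -> R -> R) : Prop :=
  (forall x y, Tri x y ->
     ky x y + kx x y = f x y - RInt (fun eta => f x eta * k eta y) y x) /\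
  (forall y, I01 y -> k 1 y = 0).

Definition volt_minus (k : R -> R -> R) (w : R -> R) : R -> R :=
  fun x => w x - RInt (fun y => k x y * w y) 0 x.
Definition volt_plus (l : R -> R -> R) (u : R -> R) : R -> R :=
  fun x => u x + RInt (fun y => l x y * u y) 0 x.

Definition inverse_kernel (k l : R -> R -> R) : Prop :=
  forall w : R -> R, (forall x, I01 x -> cont_within I01 w x) ->
    (forall x, I01 x -> volt_plus l (volt_minus k w) x = w x) /\
    (forall x, I01 x -> volt_minus k (volt_plus l w) x = w x).

Definition p1 (g : R -> R) (k : R -> R -> R) : R -> R := fun x => g x - k x 0.
Definition theta (g : R -> R) (k l : R -> R -> R) : R -> R :=
  volt_plus l (p1 g k).

Definition what (th Y U : R -> R) (x t : R) : R :=
  RInt (fun tau => th (t + x - tau) * Y tau) (t + x - 1) t + U (t + x - 1).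

(* Let w^ = (I + L) u^ be the observer state in the target coordinates, so that
   u^ = (I - K) w^ since l is the inverse kernel of k.  Differentiating this
   identity in t and in x, integrating by parts in the Volterra integral,
   swapping the order of integration in the nonlocal term and using the kernel
   equation of k, the observer equation becomes (I - K)(w^_t - w^_x - theta Y) = 0,
   because the output injection satisfies p1 = (I - K) theta.  Hence w^ solves
   the transport equation w^_t = w^_x + theta(x) Y(t) with w^(1, t) = U(t)
   (as k(1, .) = 0).  Along the characteristic x + s = t + z the state thus
   changes by theta(t + z - s) Y(s) ds; integrating from the boundary, reached
   at time t + z - 1 >= 0 when t >= 1, gives w^(z, t) = [what ... z t], and
   applying I - K gives u^. *)

From Stdlib Require Import Reals Lra.
From Coquelicot Require Import Coquelicot.
Open Scope R_scope.

Definition cont1 (f : R -> R) : Prop := forall x, continuity_pt f x.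
Definition cont2 (F : R -> R -> R) : Prop := forall x y, continuity_2d_pt F x y.

Lemma within_locally_eps (D : R -> Prop) (h : R -> R) x l :
  filterlim h (within D (locally x)) (locally l) ->
  forall eps, 0 < eps -> exists del, 0 < del /\
    forall y, Rabs (y - x) < del -> D y -> Rabs (h y - l) < eps.
Proof.
  intros H eps Heps.
  destruct (H (fun z => Rabs (z - l) < eps)) as [del Hdel].
  { exists (mkposreal eps Heps). intros z Hz. exact Hz. }
  exists del. split; [apply cond_pos|]. intros y Hy HD. now apply Hdel.
Qed.

Lemma within2_locally_eps (D : R -> R -> Prop) (F : R -> R -> R) x y l :
  filterlim (fun p : R * R => F (fst p) (snd p))
    (within (fun p : R * R => D (fst p) (snd p)) (locally (x, y))) (locally l) ->
  forall eps, 0 < eps -> exists del, 0 < del /\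
    forall u v, Rabs (u - x) < del -> Rabs (v - y) < del -> D u v ->
      Rabs (F u v - l) < eps.
Proof.
  intros H eps Heps.
  destruct (H (fun z => Rabs (z - l) < eps)) as [del Hdel].
  { exists (mkposreal eps Heps). intros z Hz. exact Hz. }
  exists del. split; [apply cond_pos|]. intros u v Hu Hv HD.
  now apply (Hdel (u, v)).
Qed.

Lemma is_derive_of_deriv_within (D : R -> Prop) (h h' : R -> R) x d del :
  0 < del -> (forall y, Rabs (y - x) < del -> D y /\ h' y = h y) ->
  deriv_within D h x d -> is_derive h' x d.
Proof.
  intros Hdel Hnear Hd.
  apply is_derive_ext_loc with h.
  { exists (mkposreal del Hdel). intros y Hy. symmetry. now apply Hnear. }
  apply is_derive_Reals. intros eps Heps.
  destruct (within_locally_eps _ _ _ _ Hd eps Heps) as [del' [Hdel' Hq]].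
  assert (Hm : 0 < Rmin del del') by now apply Rmin_pos.
  exists (mkposreal _ Hm). intros h0 Hh0 Hh. simpl in Hh.
  assert (E : x + h0 - x = h0) by ring.
  specialize (Hq (x + h0)). rewrite E in Hq. apply Hq.
  - eapply Rlt_le_trans; [exact Hh | apply Rmin_r].
  - split; [|lra]. apply Hnear. rewrite E.
    eapply Rlt_le_trans; [exact Hh | apply Rmin_l].
Qed.

(** * Extension of the data to the whole plane *)

(* Every datum is extended by composing it with a 1-Lipschitz retraction of
   the plane onto its closed domain.  This turns continuity relative to the
   domain into continuity everywhere, as Coquelicot's integration and
   differentiation lemmas require, without changing values on the domain or
   derivatives at interior points. *)

Definition clamp (a b x : R) : R := Rmax a (Rmin b x).

Lemma clamp_in a b x : a <= b -> a <= clamp a b x <= b.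
Proof. intros. unfold clamp, Rmax, Rmin. repeat destruct Rle_dec; lra. Qed.

Lemma clamp_id a b x : a <= x <= b -> clamp a b x = x.
Proof. intros. unfold clamp, Rmax, Rmin. repeat destruct Rle_dec; lra. Qed.

Lemma clamp_lipschitz a b b' x y : a <= b -> a <= b' ->
  Rabs (clamp a b x - clamp a b' y) <= Rabs (x - y) + Rabs (b - b').
Proof.
  intros. unfold clamp, Rmax, Rmin.
  repeat destruct Rle_dec; unfold Rabs; repeat destruct Rcase_abs; lra.
Qed.

Lemma clamp01_lipschitz x y : Rabs (clamp 0 1 x - clamp 0 1 y) <= Rabs (x - y).
Proof.
  pose proof (clamp_lipschitz 0 1 1 x y ltac:(lra) ltac:(lra)) as H.
  rewrite Rminus_eq_0, Rabs_R0, Rplus_0_r in H. exact H.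
Qed.

Lemma Rmax0_lipschitz x y : Rabs (Rmax 0 x - Rmax 0 y) <= Rabs (x - y).
Proof. unfold Rmax. repeat destruct Rle_dec; unfold Rabs; repeat destruct Rcase_abs; lra. Qed.

Definition ext_unit (h : R -> R) (x : R) : R := h (clamp 0 1 x).
Definition ext_tri (F : R -> R -> R) (x y : R) : R :=
  F (clamp 0 1 x) (clamp 0 (clamp 0 1 x) y).
Definition ext_quad (F : R -> R -> R) (x t : R) : R := F (clamp 0 1 x) (Rmax 0 t).

Lemma ext_unit_eq h x : I01 x -> ext_unit h x = h x.
Proof. intros Hx. unfold ext_unit. now rewrite clamp_id. Qed.

Lemma ext_tri_eq F x y : Tri x y -> ext_tri F x y = F x y.
Proof. intros H. unfold ext_tri, Tri in *. rewrite (clamp_id 0 1 x), clamp_id; lra. Qed.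

Lemma ext_quad_eq F x t : Quad x t -> ext_quad F x t = F x t.
Proof.
  intros [Hx Ht]. unfold ext_quad. rewrite clamp_id by exact Hx.
  unfold Rmax, Rpos in *. destruct Rle_dec; [reflexivity | lra].
Qed.

Lemma cont1_retract (D : R -> Prop) (h r : R -> R) :
  (forall x, D x -> cont_within D h x) -> (forall x, D (r x)) ->
  (forall x y, Rabs (r y - r x) <= Rabs (y - x)) ->
  cont1 (fun x => h (r x)).
Proof.
  intros Hh HD Hr x. apply continuity_pt_filterlim. intros P [e He].
  destruct (within_locally_eps _ _ _ _ (Hh _ (HD x)) e (cond_pos e)) as [d [Hd Hq]].
  exists (mkposreal _ Hd). intros y Hy. apply He. apply Hq; [|apply HD].
  eapply Rle_lt_trans; [apply Hr | exact Hy].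
Qed.

Lemma cont2_retract (D : R -> R -> Prop) (F r1 r2 : R -> R -> R) :
  (forall x y, D x y -> cont2_within D F x y) -> (forall x y, D (r1 x y) (r2 x y)) ->
  (forall x y u v, Rabs (r1 u v - r1 x y) <= Rabs (u - x) + Rabs (v - y) /\
                   Rabs (r2 u v - r2 x y) <= Rabs (u - x) + Rabs (v - y)) ->
  cont2 (fun u v => F (r1 u v) (r2 u v)).
Proof.
  intros HF HD Hr x y eps.
  destruct (within2_locally_eps _ _ _ _ _ (HF _ _ (HD x y)) eps (cond_pos eps))
    as [d [Hd Hq]].
  assert (Hd2 : 0 < d / 2) by lra.
  exists (mkposreal _ Hd2). simpl. intros u v Hu Hv.
  destruct (Hr x y u v). apply Hq; [lra | lra | apply HD].
Qed.

Lemma ext_unit_cont h : (forall x, I01 x -> cont_within I01 h x) -> cont1 (ext_unit h).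
Proof.
  intros Hh. apply (cont1_retract I01 h (clamp 0 1) Hh).
  - intros x. apply clamp_in. lra.
  - intros x y. apply clamp01_lipschitz.
Qed.

Lemma ext_tri_cont F : (forall x y, Tri x y -> cont2_within Tri F x y) -> cont2 (ext_tri F).
Proof.
  intros HF. apply (cont2_retract Tri F _ _ HF).
  - intros x y. pose proof (clamp_in 0 1 x ltac:(lra)).
    pose proof (clamp_in 0 (clamp 0 1 x) y ltac:(lra)). unfold Tri. lra.
  - intros x y u v. pose proof (clamp_in 0 1 x ltac:(lra)). pose proof (clamp_in 0 1 u ltac:(lra)).
    pose proof (clamp01_lipschitz u x). pose proof (Rabs_pos (u - x)). pose proof (Rabs_pos (v - y)).
    pose proof (clamp_lipschitz 0 (clamp 0 1 u) (clamp 0 1 x) v y ltac:(lra) ltac:(lra)). lra.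
Qed.

Lemma ext_quad_cont F : (forall x t, Quad x t -> cont2_within Quad F x t) -> cont2 (ext_quad F).
Proof.
  intros HF. apply (cont2_retract Quad F _ _ HF).
  - intros x t. split; [apply clamp_in; lra | apply Rmax_l].
  - intros x t u v. pose proof (clamp01_lipschitz u x). pose proof (Rmax0_lipschitz v t).
    pose proof (Rabs_pos (u - x)). pose proof (Rabs_pos (v - t)). lra.
Qed.

Lemma ext_tri_dx F F1 F2 x y : C1_2_with Tri F F1 F2 -> 0 <= y -> y < x < 1 ->
  is_derive (fun x' => ext_tri F x' y) x (ext_tri F1 x y).
Proof.
  intros HF Hy Hxy. rewrite ext_tri_eq by (unfold Tri; lra).
  apply (is_derive_of_deriv_within (fun x' => Tri x' y) (fun x' => F x' y) _ _ _
           (Rmin (x - y) (1 - x))).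
  - apply Rmin_pos; lra.
  - intros z Hz. apply Rabs_lt_between' in Hz.
    pose proof (Rmin_l (x - y) (1 - x)). pose proof (Rmin_r (x - y) (1 - x)).
    assert (Tri z y) by (unfold Tri; lra). split; [assumption|]. now apply ext_tri_eq.
  - apply HF. unfold Tri. lra.
Qed.

Lemma ext_tri_dy F F1 F2 x y : C1_2_with Tri F F1 F2 -> 0 < y < x -> x <= 1 ->
  is_derive (ext_tri F x) y (ext_tri F2 x y).
Proof.
  intros HF Hy Hxy. rewrite ext_tri_eq by (unfold Tri; lra).
  apply (is_derive_of_deriv_within (fun y' => Tri x y') (F x) _ _ _ (Rmin y (x - y))).
  - apply Rmin_pos; lra.
  - intros z Hz. apply Rabs_lt_between' in Hz.
    pose proof (Rmin_l y (x - y)). pose proof (Rmin_r y (x - y)).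
    assert (Tri x z) by (unfold Tri; lra). split; [assumption|]. now apply ext_tri_eq.
  - apply HF. unfold Tri. lra.
Qed.

Lemma ext_quad_dx F F1 F2 x t : C1_2_with Quad F F1 F2 -> 0 < x < 1 -> 0 <= t ->
  is_derive (fun x' => ext_quad F x' t) x (ext_quad F1 x t).
Proof.
  intros HF Hx Ht. rewrite ext_quad_eq by (unfold Quad, I01, Rpos; lra).
  apply (is_derive_of_deriv_within (fun x' => Quad x' t) (fun x' => F x' t) _ _ _
           (Rmin x (1 - x))).
  - apply Rmin_pos; lra.
  - intros z Hz. apply Rabs_lt_between' in Hz.
    pose proof (Rmin_l x (1 - x)). pose proof (Rmin_r x (1 - x)).
    assert (Quad z t) by (unfold Quad, I01, Rpos; lra). split; [assumption|].
    now apply ext_quad_eq.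
  - apply HF. unfold Quad, I01, Rpos. lra.
Qed.

Lemma ext_quad_dt F F1 F2 x t : C1_2_with Quad F F1 F2 -> 0 < t ->
  is_derive (ext_quad F x) t (ext_quad F2 x t).
Proof.
  intros HF Ht. pose (x0 := clamp 0 1 x).
  assert (Hx0 : 0 <= x0 <= 1) by (apply clamp_in; lra).
  assert (Et : forall s, 0 < s -> ext_quad F x s = F x0 s).
  { intros s Hs. unfold ext_quad, Rmax. destruct Rle_dec; [reflexivity | lra]. }
  replace (ext_quad F2 x t) with (F2 x0 t)
    by (unfold ext_quad, Rmax; destruct Rle_dec; [reflexivity | lra]).
  apply (is_derive_of_deriv_within (fun s => Quad x0 s) (F x0) _ _ _ t Ht).
  - intros s Hs. apply Rabs_lt_between' in Hs.
    split; [unfold Quad, I01, Rpos; lra | apply Et; lra].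
  - apply HF. unfold Quad, I01, Rpos. lra.
Qed.

Lemma cont1_const c : cont1 (fun _ => c).
Proof. intros x. apply continuity_pt_const. now intros a b. Qed.
Lemma cont1_plus f g : cont1 f -> cont1 g -> cont1 (fun x => f x + g x).
Proof. intros Hf Hg x. now apply continuity_pt_plus. Qed.
Lemma cont1_minus f g : cont1 f -> cont1 g -> cont1 (fun x => f x - g x).
Proof. intros Hf Hg x. now apply continuity_pt_minus. Qed.
Lemma cont1_mult f g : cont1 f -> cont1 g -> cont1 (fun x => f x * g x).
Proof. intros Hf Hg x. now apply continuity_pt_mult. Qed.

Lemma cont2_plus F G : cont2 F -> cont2 G -> cont2 (fun x y => F x y + G x y).
Proof. intros HF HG x y. now apply continuity_2d_pt_plus. Qed.
Lemma cont2_mult F G : cont2 F -> cont2 G -> cont2 (fun x y => F x y * G x y).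
Proof. intros HF HG x y. now apply continuity_2d_pt_mult. Qed.

Lemma cont2_swap F : cont2 F -> cont2 (fun x y => F y x).
Proof. intros HF x y eps. destruct (HF y x eps) as [d Hd]. exists d. auto. Qed.

Lemma cont2_fst f : cont1 f -> cont2 (fun x _ => f x).
Proof.
  intros Hf x y eps. destruct (proj1 (continuity_pt_filterlim f x) (Hf x)
    (fun z => Rabs (z - f x) < eps)) as [d Hd].
  { exists eps. now intros z Hz. }
  exists d. intros u v Hu _. exact (Hd u Hu).
Qed.

Lemma cont2_snd f : cont1 f -> cont2 (fun _ y => f y).
Proof. intros Hf. apply (cont2_swap (fun x _ => f x)), cont2_fst, Hf. Qed.

Lemma cont1_comp2 F g h : cont2 F -> cont1 g -> cont1 h -> cont1 (fun x => F (g x) (h x)).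
Proof.
  intros HF Hg Hh x. apply continuity_pt_filterlim. intros P [e He].
  destruct (HF (g x) (h x) e) as [d Hd].
  destruct (proj1 (continuity_pt_filterlim g x) (Hg x) (fun z => Rabs (z - g x) < d))
    as [d1 Hd1]; [now exists d|].
  destruct (proj1 (continuity_pt_filterlim h x) (Hh x) (fun z => Rabs (z - h x) < d))
    as [d2 Hd2]; [now exists d|].
  assert (Hm : 0 < Rmin d1 d2) by (apply Rmin_pos; apply cond_pos).
  exists (mkposreal _ Hm). intros u Hu. apply He. simpl in Hu.
  apply Hd; [apply Hd1 | apply Hd2]; eapply Rlt_le_trans;
    [exact Hu | apply Rmin_l | exact Hu | apply Rmin_r].
Qed.

Lemma cont1_id : cont1 (fun x => x).
Proof. intros x. apply continuity_pt_id. Qed.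

Lemma cont1_comp f g : cont1 f -> cont1 g -> cont1 (fun x => f (g x)).
Proof. intros Hf Hg x. apply continuity_pt_comp; [apply Hg | apply Hf]. Qed.

Lemma cont2_slice1 F y : cont2 F -> cont1 (fun x => F x y).
Proof. intros HF. apply (cont1_comp2 F); [exact HF | apply cont1_id | apply cont1_const]. Qed.
Lemma cont2_slice2 F x : cont2 F -> cont1 (F x).
Proof. intros HF. apply (cont1_comp2 F (fun _ => x) (fun y => y)); [exact HF | apply cont1_const | apply cont1_id]. Qed.
Lemma cont1_diag F : cont2 F -> cont1 (fun x => F x x).
Proof. intros HF. apply (cont1_comp2 F); [exact HF | apply cont1_id | apply cont1_id]. Qed.

Create HintDb cont.
#[global] Hint Resolve cont1_const cont1_plus cont1_minus cont1_mult cont1_id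
  cont2_plus cont2_mult cont2_fst cont2_snd cont2_swap
  cont2_slice1 cont2_slice2 cont1_diag : cont.

Lemma cont1_cont_within (D : R -> Prop) h x : cont1 h -> cont_within D h x.
Proof.
  intros Hh P HP. destruct (proj1 (continuity_pt_filterlim h x) (Hh x) P HP) as [e He].
  exists e. intros y Hy _. now apply He.
Qed.

Lemma ex_RInt_cont (f : R -> R) a b : cont1 f -> ex_RInt f a b.
Proof.
  intros Hf. apply (ex_RInt_continuous (V := R_CompleteNormedModule)).
  intros z _. apply continuity_pt_filterlim, Hf.
Qed.
#[global] Hint Resolve ex_RInt_cont : cont.

Lemma RInt_Rplus (f g : R -> R) a b : ex_RInt f a b -> ex_RInt g a b ->
  RInt (fun y => f y + g y) a b = RInt f a b + RInt g a b.
Proof. intros. now apply (RInt_plus f g a b). Qed.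
Lemma RInt_Rminus (f g : R -> R) a b : ex_RInt f a b -> ex_RInt g a b ->
  RInt (fun y => f y - g y) a b = RInt f a b - RInt g a b.
Proof. intros. now apply (RInt_minus f g a b). Qed.
Lemma RInt_Rscal (f : R -> R) a b c : ex_RInt f a b -> RInt (fun y => c * f y) a b = c * RInt f a b.
Proof. intros. now apply (RInt_scal f a b c). Qed.
Lemma RInt_Rchasles (f : R -> R) a b c : ex_RInt f a b -> ex_RInt f b c ->
  RInt f a b + RInt f b c = RInt f a c.
Proof. intros. now apply (RInt_Chasles f a b c). Qed.
Lemma RInt_Rconst a b (c : R) : RInt (fun _ => c) a b = (b - a) * c.
Proof. now rewrite RInt_const. Qed.
Lemma RInt_Rpoint (f : R -> R) a : RInt f a a = 0.
Proof. exact (RInt_point (V := R_CompleteNormedModule) a f). Qed.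

Lemma RInt_ext_le (f g : R -> R) a b : a <= b -> (forall y, a < y < b -> f y = g y) ->
  RInt f a b = RInt g a b.
Proof.
  intros Hab H. apply RInt_ext. intros y Hy.
  rewrite Rmin_left, Rmax_right in Hy by exact Hab. now apply H.
Qed.

Lemma RInt_abs_le (f : R -> R) a b M : ex_RInt f a b ->
  (forall y, Rmin a b <= y <= Rmax a b -> Rabs (f y) <= M) ->
  Rabs (RInt f a b) <= Rabs (b - a) * M.
Proof.
  intros Hf HM. destruct (Rle_dec a b) as [Hab|Hab].
  - rewrite (Rabs_right (b - a)) by lra. apply abs_RInt_le_const; [exact Hab | exact Hf |].
    intros y Hy. apply HM. rewrite Rmin_left, Rmax_right; lra.
  - assert (E : RInt f a b = - RInt f b a).
    { rewrite <- (opp_RInt_swap f b a); [reflexivity | now apply ex_RInt_swap]. }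
    rewrite E, Rabs_Ropp, (Rabs_left (b - a)), Ropp_minus_distr by lra.
    apply abs_RInt_le_const; [lra | now apply ex_RInt_swap |].
    intros y Hy. apply HM. rewrite Rmin_right, Rmax_left; lra.
Qed.

Lemma is_derive_RInt_upper (G : R -> R) a x : cont1 G -> is_derive (fun z => RInt G a z) x (G x).
Proof.
  intros HG. apply (is_derive_RInt G (fun z => RInt G a z) a x).
  - exists (mkposreal 1 Rlt_0_1). intros y _. apply (RInt_correct G a y). auto with cont.
  - apply continuity_pt_filterlim, HG.
Qed.

Lemma is_derive_continuity_pt (f : R -> R) x l : is_derive f x l -> continuity_pt f x.
Proof.
  intros H. apply continuity_pt_filterlim, (ex_derive_continuous f x). now exists l.
Qed.

(* The extended data are differentiable only at interior points of their
   domains, hence the open interval. *)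
Lemma RInt_of_is_derive_interior (F G : R -> R) a b : a <= b ->
  (forall x, a <= x <= b -> continuity_pt F x) ->
  (forall x, a < x < b -> is_derive F x (G x)) -> cont1 G ->
  RInt G a b = F b - F a.
Proof.
  intros Hab HF HD HG.
  destruct (MVT_gen (fun s => F s - RInt G a s) a b (fun _ => 0)) as [c [_ Ec]].
  - intros x Hx. rewrite Rmin_left, Rmax_right in Hx by lra.
    replace 0 with (G x - G x) by ring.
    apply (is_derive_minus F (fun s => RInt G a s)); [now apply HD | now apply is_derive_RInt_upper].
  - intros x Hx. rewrite Rmin_left, Rmax_right in Hx by lra.
    apply continuity_pt_minus; [now apply HF|].
    apply is_derive_continuity_pt with (G x). now apply is_derive_RInt_upper.
  - simpl in Ec. rewrite RInt_Rpoint in Ec. lra.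
Qed.

Lemma is_derive_Rplus (f g : R -> R) x df dg : is_derive f x df -> is_derive g x dg ->
  is_derive (fun y => f y + g y) x (df + dg).
Proof. intros. now apply (is_derive_plus f g). Qed.
Lemma is_derive_Rminus (f g : R -> R) x df dg : is_derive f x df -> is_derive g x dg ->
  is_derive (fun y => f y - g y) x (df - dg).
Proof. intros. now apply (is_derive_minus f g). Qed.
Lemma is_derive_Rmult (f g : R -> R) x df dg : is_derive f x df -> is_derive g x dg ->
  is_derive (fun y => f y * g y) x (df * g x + f x * dg).
Proof. intros. apply (is_derive_mult f g); auto. intros; apply Rmult_comm. Qed.

Lemma is_derive_unique_loc (f g : R -> R) x df dg del : 0 < del ->
  (forall y, Rabs (y - x) < del -> f y = g y) ->
  is_derive f x df -> is_derive g x dg -> df = dg.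
Proof.
  intros Hdel E Hf Hg. apply is_derive_unique in Hg. rewrite <- Hg.
  apply eq_sym, is_derive_unique, is_derive_ext_loc with f; [|exact Hf].
  exists (mkposreal del Hdel). intros y Hy. now apply E.
Qed.

(** * Parametric integrals *)

Lemma cont1_bounded f a b : cont1 f ->
  exists M, 0 <= M /\ forall y, a <= y <= b -> Rabs (f y) <= M.
Proof.
  intros Hf. destruct (Rle_dec a b) as [Hab|Hab].
  - destruct (continuity_ab_maj (fun y => Rabs (f y)) a b Hab) as [m [Hm _]].
    + intros y _. apply (continuity_pt_comp f Rabs); [apply Hf | apply Rcontinuity_abs].
    + exists (Rabs (f m)). split; [apply Rabs_pos | exact Hm].
  - exists 0. split; [lra|]. intros y Hy. lra.
Qed.

Lemma cont2_unif_near F a b x0 : cont2 F -> forall eps, 0 < eps ->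
  exists del, 0 < del /\ forall x y, Rabs (x - x0) < del -> a <= y <= b ->
    Rabs (F x y - F x0 y) < eps.
Proof.
  intros HF eps Heps.
  destruct (uniform_continuity_2d_1d' F a b x0 (fun y _ => HF x0 y) (mkposreal eps Heps))
    as [del Hdel].
  exists del. split; [apply cond_pos|]. intros x y Hx Hy.
  apply Rabs_lt_between' in Hx.
  apply Hdel; try lra. rewrite Rminus_eq_0, Rabs_R0. apply cond_pos.
Qed.

Lemma cont2_mult_unif_near A C a b p0 q0 : cont2 A -> cont2 C -> forall eps, 0 < eps ->
  exists del, 0 < del /\ forall p q y, Rabs (p - p0) < del -> Rabs (q - q0) < del ->
    a <= y <= b -> Rabs (A p y * C y q - A p0 y * C y q0) < eps.
Proof.
  intros HA HC eps Heps.
  destruct (cont1_bounded (A p0) a b) as [MA [HMA0 HMA]]; [auto with cont|].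
  destruct (cont1_bounded (fun y => C y q0) a b) as [MC [HMC0 HMC]]; [auto with cont|].
  set (e := Rmin 1 (eps / (MA + MC + 2))).
  assert (He : 0 < e) by (apply Rmin_pos; [lra | apply Rdiv_lt_0_compat; lra]).
  assert (He1 : e <= 1) by apply Rmin_l.
  assert (Hee : e * (MA + MC + 2) <= eps).
  { apply Rle_trans with (eps / (MA + MC + 2) * (MA + MC + 2)).
    - apply Rmult_le_compat_r; [lra | apply Rmin_r].
    - right. field. lra. }
  destruct (cont2_unif_near A a b p0 HA e He) as [dA [HdA EA]].
  destruct (cont2_unif_near (fun q y => C y q) a b q0 (cont2_swap C HC) e He) as [dC [HdC EC]].
  exists (Rmin dA dC). split; [now apply Rmin_pos|]. intros p q y Hp Hq Hy.
  assert (Ha := EA p y ltac:(eapply Rlt_le_trans; [exact Hp | apply Rmin_l]) Hy).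
  assert (Hc := EC q y ltac:(eapply Rlt_le_trans; [exact Hq | apply Rmin_r]) Hy).
  simpl in Hc. pose proof (HMA y Hy). pose proof (HMC y Hy).
  replace (A p y * C y q - A p0 y * C y q0)
    with ((A p y - A p0 y) * C y q + A p0 y * (C y q - C y q0)) by ring.
  assert (HCq : Rabs (C y q) <= MC + 1).
  { replace (C y q) with ((C y q - C y q0) + C y q0) by ring.
    eapply Rle_trans; [apply Rabs_triang | lra]. }
  eapply Rle_lt_trans; [apply Rabs_triang|]. rewrite !Rabs_mult.
  apply Rle_lt_trans with (e * (MC + 1) + MA * e); [|nra].
  apply Rplus_le_compat; apply Rmult_le_compat; try apply Rabs_pos; lra.
Qed.

Lemma RInt_upper_diff_le (h h0 : R -> R) a b p p0 M e : cont1 h -> cont1 h0 ->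
  a <= 0 <= b -> a <= p <= b -> a <= p0 <= b ->
  (forall y, a <= y <= b -> Rabs (h y - h0 y) <= e) ->
  (forall y, a <= y <= b -> Rabs (h0 y) <= M) ->
  Rabs (RInt h 0 p - RInt h0 0 p0) <= Rabs (p - p0) * (M + e) + Rabs p0 * e.
Proof.
  intros Hh Hh0 H0 Hp Hp0 Hclose HM.
  rewrite <- (RInt_Rchasles h 0 p0 p) by auto with cont.
  replace (RInt h 0 p0 + RInt h p0 p - RInt h0 0 p0)
    with (RInt h p0 p + RInt (fun y => h y - h0 y) 0 p0)
    by (rewrite RInt_Rminus by auto with cont; ring).
  eapply Rle_trans; [apply Rabs_triang | apply Rplus_le_compat].
  - apply RInt_abs_le; [auto with cont|]. intros y Hy.
    assert (Hy' : a <= y <= b) by (unfold Rmin, Rmax in Hy; destruct Rle_dec; lra).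
    replace (h y) with ((h y - h0 y) + h0 y) by ring.
    eapply Rle_trans; [apply Rabs_triang|].
    pose proof (Hclose y Hy'). pose proof (HM y Hy'). lra.
  - rewrite <- (Rminus_0_r p0) at 2. apply RInt_abs_le; [auto with cont|].
    intros y Hy. apply Hclose. unfold Rmin, Rmax in Hy; destruct Rle_dec; lra.
Qed.

Lemma volterra_cont A C : cont2 A -> cont2 C ->
  cont2 (fun p q => RInt (fun y => A p y * C y q) 0 p).
Proof.
  intros HA HC p0 q0 eps.
  set (b := Rabs p0 + 1).
  assert (Hb : 0 < b) by (unfold b; pose proof (Rabs_pos p0); lra).
  assert (Hp0 : - b + 1 <= p0 <= b - 1) by (unfold b, Rabs; destruct Rcase_abs; lra).
  destruct (cont1_bounded (fun y => A p0 y * C y q0) (- b) b) as [M [HM0 HM]];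
    [auto with cont|].
  set (e := Rmin 1 (eps / (2 * b))).
  assert (He : 0 < e) by (apply Rmin_pos; [lra | apply Rdiv_lt_0_compat; [apply cond_pos | lra]]).
  destruct (cont2_mult_unif_near A C (- b) b p0 q0 HA HC e He) as [d [Hd Hclose]].
  set (d' := Rmin (Rmin d 1) (eps / (2 * (M + 1)))).
  assert (Hd' : 0 < d').
  { repeat apply Rmin_pos; try lra. apply Rdiv_lt_0_compat; [apply cond_pos | lra]. }
  exists (mkposreal d' Hd'). simpl. intros p q Hp Hq.
  assert (Hpd : Rabs (p - p0) < Rmin d 1) by (eapply Rlt_le_trans; [exact Hp | apply Rmin_l]).
  assert (Hqd : Rabs (q - q0) < d)
    by (eapply Rlt_le_trans; [exact Hq|]; eapply Rle_trans; apply Rmin_l).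
  assert (Hpe : Rabs (p - p0) < eps / (2 * (M + 1))) by (eapply Rlt_le_trans; [exact Hp | apply Rmin_r]).
  pose proof (Rmin_l d 1). pose proof (Rmin_r d 1).
  assert (Hp1 := proj1 (Rabs_lt_between' p p0 1) ltac:(lra)).
  eapply Rle_lt_trans.
  { apply (RInt_upper_diff_le _ _ (- b) b p p0 M e); auto with cont; try lra.
    intros y Hy. left. apply Hclose; lra. }
  assert (e <= 1) by apply Rmin_l.
  assert (T1 : Rabs (p - p0) * (M + e) < eps / 2).
  { apply Rle_lt_trans with (Rabs (p - p0) * (M + 1)); [apply Rmult_le_compat_l; [apply Rabs_pos | lra]|].
    replace (eps / 2) with (eps / (2 * (M + 1)) * (M + 1)) by (field; lra).
    apply Rmult_lt_compat_r; lra. }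
  assert (T2 : Rabs p0 * e < eps / 2).
  { apply Rle_lt_trans with (Rabs p0 * (eps / (2 * b))).
    - apply Rmult_le_compat_l; [apply Rabs_pos | apply Rmin_r].
    - replace (eps / 2) with (b * (eps / (2 * b))) by (field; lra).
      apply Rmult_lt_compat_r; [apply Rdiv_lt_0_compat; [apply cond_pos | lra] | unfold b; lra]. }
  lra.
Qed.

Lemma volterra_cont1 A w : cont2 A -> cont1 w ->
  cont1 (fun p => RInt (fun y => A p y * w y) 0 p).
Proof.
  intros HA Hw. apply (cont2_slice1 (fun p q => RInt (fun y => A p y * w y) 0 p) 0).
  apply (volterra_cont A (fun y _ => w y)); auto with cont.
Qed.

Lemma RInt_lower_cont (a : R -> R) (B : R -> R -> R) : cont1 a -> cont2 B ->
  cont2 (fun z y => RInt (fun eta => a eta * B eta y) y z).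
Proof.
  intros Ha HB.
  assert (Hz : cont2 (fun z y => RInt (fun eta => a eta * B eta y) 0 z)).
  { apply (volterra_cont (fun _ eta => a eta) B); auto with cont. }
  assert (Hy : cont1 (fun y => RInt (fun eta => a eta * B eta y) 0 y)).
  { intros y. apply continuity_pt_ext with (fun y => RInt (fun eta => a eta * B eta y * 1) 0 y).
    - intros y'. apply RInt_ext. intros. apply Rmult_1_r.
    - apply (volterra_cont1 (fun y eta => a eta * B eta y)); auto with cont. }
  intros z y. apply continuity_2d_pt_ext with
    (fun z y => RInt (fun eta => a eta * B eta y) 0 z - RInt (fun eta => a eta * B eta y) 0 y).
  - intros z' y'. rewrite <- (RInt_Rchasles _ 0 y' z') by auto with cont. ring.
  - apply continuity_2d_pt_minus; [apply Hz | apply (cont2_snd _ Hy)].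
Qed.

Lemma is_derive_RInt_upper_param (F F1 : R -> R -> R) a x : cont2 F -> cont2 F1 ->
  (forall u t, is_derive (fun z => F z t) u (F1 u t)) ->
  is_derive (fun p => RInt (F p) a p) x (F x x + RInt (F1 x) a x).
Proof.
  intros HF HF1 HD.
  assert (DF : forall u t, Derive (fun z => F z t) u = F1 u t) by (intros; now apply is_derive_unique).
  assert (HDF : cont2 (fun u t => Derive (fun z => F z t) u)).
  { intros u t. apply continuity_2d_pt_ext with F1; [intros; now rewrite DF | apply HF1]. }
  replace (F x x + RInt (F1 x) a x)
    with (RInt (fun t => Derive (fun u => F u t) x) a x + F x x * 1).
  - apply (is_derive_RInt_param_bound_comp_aux3 F a (fun p => p) x 1).
    + exists (mkposreal 1 Rlt_0_1). intros; auto with cont.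
    + exists (mkposreal 1 Rlt_0_1). exists (mkposreal 1 Rlt_0_1). intros; auto with cont.
    + apply (is_derive_id x).
    + exists (mkposreal 1 Rlt_0_1). exists (mkposreal 1 Rlt_0_1). intros u _ t _. eexists. apply HD.
    + intros t _. apply HDF.
    + exists (mkposreal 1 Rlt_0_1). intros; apply HDF.
    + apply (cont2_slice2 F x HF).
  - rewrite (RInt_ext _ (F1 x)) by (intros; apply DF). ring.
Qed.

Lemma is_derive_Rmult_r (f : R -> R) x d c :
  is_derive f x d -> is_derive (fun z => f z * c) x (d * c).
Proof.
  intros H. apply (is_derive_ext (fun z => c * f z)); [intros; apply Rmult_comm|].
  rewrite Rmult_comm. now apply (is_derive_scal f x c d).
Qed.

Lemma is_derive_volterra_param A C Cq p q del : cont2 A -> cont2 C -> cont2 Cq -> 0 < del ->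
  (forall y s, Rabs (s - q) < del -> is_derive (C y) s (Cq y s)) ->
  is_derive (fun s => RInt (fun y => A p y * C y s) 0 p) q
            (RInt (fun y => A p y * Cq y q) 0 p).
Proof.
  intros HA HC HCq Hdel HD.
  set (f u t := A p t * C t u).
  assert (Hf : forall u t, Rabs (u - q) < del -> is_derive (fun z => f z t) u (A p t * Cq t u)).
  { intros u t Hu. apply is_derive_scal. now apply HD. }
  assert (Df : forall u t, Rabs (u - q) < del -> Derive (fun z => f z t) u = A p t * Cq t u).
  { intros u t Hu. apply is_derive_unique. now apply Hf. }
  replace (RInt (fun y => A p y * Cq y q) 0 p) with (RInt (fun t => Derive (fun u => f u t) q) 0 p).
  - apply (is_derive_RInt_param f 0 p q).
    + exists (mkposreal del Hdel). intros u Hu t _. eexists. now apply Hf.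
    + intros t _. apply continuity_2d_pt_ext_loc with (fun u t => A p t * Cq t u).
      * exists (mkposreal del Hdel). intros u v Hu _. symmetry. now apply Df.
      * apply (cont2_mult (fun _ t => A p t) (fun u t => Cq t u)); auto with cont.
    + exists (mkposreal del Hdel). intros y _. unfold f. auto with cont.
  - apply RInt_ext. intros y _. apply Df. rewrite Rminus_eq_0, Rabs_R0. exact Hdel.
Qed.

(* Both sides vanish at [x = 0] and have the same derivative in [x]. *)
Lemma RInt_triangle_swap (a : R -> R) (B : R -> R -> R) (w : R -> R) x :
  cont1 a -> cont2 B -> cont1 w -> 0 <= x ->
  RInt (fun eta => a eta * RInt (fun y => B eta y * w y) 0 eta) 0 x
  = RInt (fun y => RInt (fun eta => a eta * B eta y) y x * w y) 0 x.
Proof.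
  intros Ha HB Hw Hx.
  set (G z y := RInt (fun eta => a eta * B eta y) y z).
  assert (HG : cont2 G) by now apply RInt_lower_cont.
  assert (HK : cont1 (fun eta => RInt (fun y => B eta y * w y) 0 eta)) by now apply volterra_cont1.
  assert (HGw : cont1 (fun z => RInt (fun y => G z y * w y) 0 z)) by now apply volterra_cont1.
  assert (DG : forall z y, is_derive (fun z => G z y * w y) z (a z * B z y * w y)).
  { intros z y. apply is_derive_Rmult_r, (is_derive_RInt_upper (fun eta => a eta * B eta y)).
    auto with cont. }
  set (F z := RInt (fun eta => a eta * RInt (fun y => B eta y * w y) 0 eta) 0 z
               - RInt (fun y => G z y * w y) 0 z).
  assert (E : RInt (fun _ => 0) 0 x = F x - F 0).
  { apply RInt_of_is_derive_interior; [exact Hx | | | auto with cont].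
    - intros z _. apply continuity_pt_minus; [|apply HGw].
      apply is_derive_continuity_pt with (a z * RInt (fun y => B z y * w y) 0 z).
      apply (is_derive_RInt_upper (fun eta => a eta * RInt (fun y => B eta y * w y) 0 eta)).
      auto with cont.
    - intros z _. replace 0 with (a z * RInt (fun y => B z y * w y) 0 z
        - (G z z * w z + RInt (fun y => a z * B z y * w y) 0 z)).
      + unfold F. apply is_derive_Rminus.
        { apply (is_derive_RInt_upper (fun eta => a eta * RInt (fun y => B eta y * w y) 0 eta)).
          auto with cont. }
        apply (is_derive_RInt_upper_param (fun z y => G z y * w y)
                 (fun z y => a z * B z y * w y)); [auto with cont | auto with cont | exact DG].
      + unfold G. rewrite RInt_Rpoint.
        rewrite (RInt_ext (fun y => a z * B z y * w y) (fun y => a z * (B z y * w y)))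
          by (intros; apply Rmult_assoc).
        rewrite RInt_Rscal by auto with cont. ring. }
  unfold F in E. rewrite RInt_Rconst, !RInt_Rpoint in E. unfold G in E. lra.
Qed.

(* Writing [A p y = A y y + int_y^p A1 s y ds] and swapping the order of
   integration turns the integral into two integrals with variable upper
   limit only, so that the interior derivative of [A] suffices. *)
Lemma is_derive_volterra A A1 B bnd x : cont2 A -> cont2 A1 -> cont1 B -> 0 < x < bnd ->
  (forall p y, 0 <= y -> y < p < bnd -> is_derive (fun p => A p y) p (A1 p y)) ->
  is_derive (fun p => RInt (fun y => A p y * B y) 0 p) x
            (A x x * B x + RInt (fun y => A1 x y * B y) 0 x).
Proof.
  intros HA HA1 HB Hx HD.
  set (H s := RInt (fun y => A1 s y * B y) 0 s).
  assert (Hrep : forall p, 0 < p < bnd ->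
    RInt (fun y => A p y * B y) 0 p = RInt (fun y => A y y * B y) 0 p + RInt H 0 p).
  { intros p Hp. unfold H.
    rewrite (RInt_ext (fun s => RInt _ 0 s) (fun s => 1 * RInt (fun y => A1 s y * B y) 0 s))
      by (intros; apply eq_sym, Rmult_1_l).
    rewrite (RInt_triangle_swap (fun _ => 1) A1 B p) by (auto with cont; lra).
    assert (HG : cont1 (fun y => RInt (fun eta => 1 * A1 eta y) y p)).
    { apply (cont2_slice2 (fun z y => RInt (fun eta => 1 * A1 eta y) y z)).
      apply (RInt_lower_cont (fun _ => 1)); auto with cont. }
    rewrite <- RInt_Rplus by auto with cont.
    apply RInt_ext_le; [lra|]. intros y Hy. rewrite <- Rmult_plus_distr_r. f_equal.
    rewrite (RInt_ext _ (fun s => A1 s y)) by (intros; apply Rmult_1_l).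
    rewrite (RInt_of_is_derive_interior (fun s => A s y)); [ring | lra | | | auto with cont].
    - intros z _. apply (cont2_slice1 A y HA).
    - intros z Hz. apply HD; lra. }
  apply is_derive_ext_loc with (fun p => RInt (fun y => A y y * B y) 0 p + RInt H 0 p).
  - exists (mkposreal _ (Rmin_pos x (bnd - x) ltac:(lra) ltac:(lra))).
    intros p Hp. assert (Hp' : Rabs (p - x) < Rmin x (bnd - x)) by exact Hp.
    apply Rabs_lt_between' in Hp'.
    pose proof (Rmin_l x (bnd - x)). pose proof (Rmin_r x (bnd - x)).
    symmetry. apply Hrep. lra.
  - apply is_derive_Rplus.
    + apply (is_derive_RInt_upper (fun y => A y y * B y)). apply cont1_mult; [apply cont1_diag, HA | exact HB].
    + apply (is_derive_RInt_upper H). unfold H. now apply volterra_cont1.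
Qed.

Lemma Rabs_sub_le_of_between a h t :
  Rmin a (a + h) <= t <= Rmax a (a + h) -> Rabs (t - a) <= Rabs h.
Proof. intros Ht. unfold Rmin, Rmax in Ht. destruct Rle_dec; unfold Rabs; repeat destruct Rcase_abs; lra. Qed.

(* Only [F_t] needs to be continuous: the increment in [t] is handled by the
   mean value theorem at the shifted abscissa, the increment in [x] by the
   derivative at a single point. *)
Lemma is_derive_characteristic F Fx Ft c s0 del : 0 < del ->
  (forall x t, Rabs (x - (c - s0)) < del -> Rabs (t - s0) < del ->
     is_derive (F x) t (Ft x t)) ->
  continuity_2d_pt Ft (c - s0) s0 ->
  is_derive (fun x => F x s0) (c - s0) Fx ->
  is_derive (fun s => F (c - s) s) s0 (Ft (c - s0) s0 - Fx).
Proof.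
  intros Hdel HD HC HX. set (x0 := c - s0) in *.
  apply is_derive_Reals. apply is_derive_Reals in HX.
  intros eps Heps.
  destruct (HX (eps / 2) ltac:(lra)) as [d1 Hd1].
  destruct (HC (mkposreal (eps / 2) ltac:(lra))) as [d2 Hd2]. simpl in Hd2.
  set (d := Rmin (Rmin d1 d2) del).
  assert (Hd : 0 < d) by (unfold d; repeat apply Rmin_pos; try apply cond_pos; lra).
  exists (mkposreal _ Hd). intros h Hh0 Hh. simpl in Hh.
  assert (Hh1 : Rabs h < d1) by (eapply Rlt_le_trans; [exact Hh|];
    unfold d; eapply Rle_trans; apply Rmin_l).
  assert (Hh2 : Rabs h < d2) by (eapply Rlt_le_trans; [exact Hh|];
    unfold d; eapply Rle_trans; [apply Rmin_l | apply Rmin_r]).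
  assert (Hh3 : Rabs h < del) by (eapply Rlt_le_trans; [exact Hh | apply Rmin_r]).
  assert (Hmh : Rabs (- h) = Rabs h) by apply Rabs_Ropp.
  assert (Hxh : Rabs (x0 - h - x0) < del) by (replace (x0 - h - x0) with (- h) by ring; lra).
  assert (Hnear := fun t => Rabs_sub_le_of_between s0 h t).
  destruct (MVT_gen (F (x0 - h)) s0 (s0 + h) (Ft (x0 - h))) as [xi [Hxi Exi]].
  - intros t Ht. apply HD; [exact Hxh|]. apply Rle_lt_trans with (Rabs h); [|exact Hh3].
    apply Hnear. split; apply Rlt_le, Ht.
  - intros t Ht. apply is_derive_continuity_pt with (Ft (x0 - h) t). apply HD; [exact Hxh|].
    apply Rle_lt_trans with (Rabs h); [now apply Hnear | exact Hh3].
  - simpl in Exi.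
    assert (Bt : Rabs (Ft (x0 - h) xi - Ft x0 s0) < eps / 2).
    { apply Hd2; [replace (x0 - h - x0) with (- h) by ring; lra|].
      apply Rle_lt_trans with (Rabs h); [now apply Hnear | exact Hh2]. }
    assert (Bx := Hd1 (- h) ltac:(lra) ltac:(lra)). replace (x0 + - h) with (x0 - h) in Bx by ring.
    replace (c - (s0 + h)) with (x0 - h) by (unfold x0; ring). fold x0.
    replace ((F (x0 - h) (s0 + h) - F x0 s0) / h - (Ft x0 s0 - Fx))
      with ((Ft (x0 - h) xi - Ft x0 s0) - ((F (x0 - h) s0 - F x0 s0) / - h - Fx)).
    + eapply Rle_lt_trans; [apply Rabs_triang|]. rewrite Rabs_Ropp. lra.
    + replace (F (x0 - h) (s0 + h) - F x0 s0) with
        ((F (x0 - h) (s0 + h) - F (x0 - h) s0) + (F (x0 - h) s0 - F x0 s0)) by ring.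
      rewrite Exi. field. exact Hh0.
Qed.

(** * The transformed observer *)

Lemma volt_minus_congr k (w w' : R -> R) x : 0 <= x ->
  (forall y, 0 <= y <= x -> w y = w' y) -> volt_minus k w x = volt_minus k w' x.
Proof.
  intros Hx E. unfold volt_minus. rewrite E by lra. f_equal.
  apply RInt_ext_le; [exact Hx|]. intros y Hy. rewrite E by lra. reflexivity.
Qed.

Lemma volt_plus_congr l (w w' : R -> R) x : 0 <= x ->
  (forall y, 0 <= y <= x -> w y = w' y) -> volt_plus l w x = volt_plus l w' x.
Proof.
  intros Hx E. unfold volt_plus. rewrite E by lra. f_equal.
  apply RInt_ext_le; [exact Hx|]. intros y Hy. rewrite E by lra. reflexivity.
Qed.

Section Transformed_observer.

Variables (f k kx ky l lx uh uhx uht : R -> R -> R) (g Y U : R -> R).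

Hypotheses (f_cont : cont2 f) (k_cont : cont2 k) (kx_cont : cont2 kx) (ky_cont : cont2 ky)
  (l_cont : cont2 l) (lx_cont : cont2 lx)
  (uh_cont : cont2 uh) (uhx_cont : cont2 uhx) (uht_cont : cont2 uht)
  (g_cont : cont1 g) (Y_cont : cont1 Y).

Hypothesis k_dx : forall x y, 0 <= y -> y < x < 1 -> is_derive (fun x => k x y) x (kx x y).
Hypothesis k_dy : forall x y, 0 < y < x -> x <= 1 -> is_derive (k x) y (ky x y).
Hypothesis l_dx : forall x y, 0 <= y -> y < x < 1 -> is_derive (fun x => l x y) x (lx x y).
Hypothesis uh_dx : forall x t, 0 < x < 1 -> 0 <= t -> is_derive (fun x => uh x t) x (uhx x t).
Hypothesis uh_dt : forall x t, 0 < t -> is_derive (uh x) t (uht x t).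

Hypothesis k_goursat : goursat f k kx ky.
Hypothesis kl_inverse : inverse_kernel k l.

Hypothesis observer : forall x t, Quad x t ->
  uht x t = uhx x t + g x * uh 0 t + RInt (fun y => f x y * uh y t) 0 x
            + p1 g k x * (Y t - uh 0 t).
Hypothesis observer_boundary : forall t, Rpos t -> uh 1 t = U t.

Definition W (x t : R) : R := volt_plus l (fun y => uh y t) x.
Definition Wt (x t : R) : R := volt_plus l (fun y => uht y t) x.
Definition Wx (x t : R) : R :=
  uhx x t + (l x x * uh x t + RInt (fun y => lx x y * uh y t) 0 x).

Lemma W_cont : cont2 W.
Proof. apply cont2_plus; [exact uh_cont | now apply volterra_cont]. Qed.
Lemma Wt_cont : cont2 Wt.
Proof. apply cont2_plus; [exact uht_cont | now apply volterra_cont]. Qed.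
Lemma Wx_cont : cont2 Wx.
Proof.
  apply cont2_plus; [exact uhx_cont | apply cont2_plus; [auto with cont | now apply volterra_cont]].
Qed.
Lemma p1_cont : cont1 (p1 g k).
Proof. unfold p1. auto with cont. Qed.
Lemma theta_cont : cont1 (theta g k l).
Proof. apply cont1_plus; [exact p1_cont | apply volterra_cont1; [exact l_cont | exact p1_cont]]. Qed.

Lemma W_dx x t : 0 < x < 1 -> 0 <= t -> is_derive (fun x => W x t) x (Wx x t).
Proof.
  intros Hx Ht. apply is_derive_Rplus; [now apply uh_dx|].
  apply (is_derive_volterra l lx (fun y => uh y t) 1); auto with cont.
Qed.

Lemma W_dt x t : 0 < t -> is_derive (W x) t (Wt x t).
Proof.
  intros Ht. apply is_derive_Rplus; [now apply uh_dt|].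
  apply (is_derive_volterra_param l uh uht x t t); auto.
  intros y s Hs. apply uh_dt. apply Rabs_lt_between' in Hs. lra.
Qed.

Lemma uh_eq_W x t : 0 <= x <= 1 -> uh x t = volt_minus k (fun y => W y t) x.
Proof.
  intros Hx. symmetry.
  apply (proj2 (kl_inverse (fun y => uh y t) (fun y _ => cont1_cont_within _ _ y
    (cont2_slice1 uh t uh_cont))) x Hx).
Qed.

Lemma uht_eq_Wt x t : 0 <= x <= 1 -> 0 < t -> uht x t = volt_minus k (fun y => Wt y t) x.
Proof.
  intros Hx Ht.
  apply (is_derive_unique_loc (uh x) (fun s => volt_minus k (fun y => W y s) x) t _ _ t Ht).
  - intros s _. now apply uh_eq_W.
  - now apply uh_dt.
  - apply is_derive_Rminus; [now apply W_dt|].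
    apply (is_derive_volterra_param k W Wt x t t); auto using W_cont, Wt_cont.
    intros y s Hs. apply W_dt. apply Rabs_lt_between' in Hs. lra.
Qed.

Lemma uhx_eq_Wx x t : 0 < x < 1 -> 0 <= t ->
  uhx x t = Wx x t - (k x x * W x t + RInt (fun y => kx x y * W y t) 0 x).
Proof.
  intros Hx Ht. assert (Hd : 0 < Rmin x (1 - x)) by (apply Rmin_pos; lra).
  apply (is_derive_unique_loc (fun x => uh x t) (volt_minus k (fun y => W y t)) x _ _ _ Hd).
  - intros y Hy. apply Rabs_lt_between' in Hy.
    pose proof (Rmin_l x (1 - x)). pose proof (Rmin_r x (1 - x)). apply uh_eq_W. lra.
  - now apply uh_dx.
  - apply is_derive_Rminus; [now apply W_dx|].
    apply (is_derive_volterra k kx (fun y => W y t) 1); auto using W_cont with cont.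
Qed.

Lemma RInt_k_Wx x t : 0 < x < 1 -> 0 <= t ->
  RInt (fun y => k x y * Wx y t) 0 x
  = k x x * W x t - k x 0 * W 0 t - RInt (fun y => ky x y * W y t) 0 x.
Proof.
  intros Hx Ht. pose proof W_cont as HW. pose proof Wx_cont as HWx.
  assert (E : RInt (fun y => ky x y * W y t + k x y * Wx y t) 0 x
              = k x x * W x t - k x 0 * W 0 t).
  { apply (RInt_of_is_derive_interior (fun y => k x y * W y t)); [lra | | | auto with cont].
    - intros y _. apply continuity_pt_mult; [apply (cont2_slice2 k x k_cont) | apply (cont2_slice1 W t HW)].
    - intros y Hy. apply (is_derive_Rmult (k x) (fun y => W y t)); [apply k_dy; lra | apply W_dx; lra]. }
  rewrite RInt_Rplus in E by auto with cont. lra.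
Qed.

(* Substitute [uh = (I - K) W], swap the order of integration and use the
   kernel equation of [k]. *)
Lemma RInt_f_uh x t : 0 < x < 1 ->
  RInt (fun y => f x y * uh y t) 0 x
  = RInt (fun y => kx x y * W y t) 0 x + RInt (fun y => ky x y * W y t) 0 x.
Proof.
  intros Hx. pose proof W_cont as HW.
  assert (HfK : cont1 (fun y => RInt (fun eta => f x eta * k eta y) y x)).
  { apply (cont2_slice2 (fun z y => RInt (fun eta => f x eta * k eta y) y z)).
    apply RInt_lower_cont; auto with cont. }
  transitivity (RInt (fun y => (f x y - RInt (fun eta => f x eta * k eta y) y x) * W y t) 0 x).
  - rewrite (RInt_ext_le _
      (fun y => f x y * W y t - f x y * RInt (fun eta => k y eta * W eta t) 0 y)) by
      (lra || (intros y Hy; rewrite (uh_eq_W y t) by lra; unfold volt_minus; ring)).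
    assert (HK : cont1 (fun y => RInt (fun eta => k y eta * W eta t) 0 y))
      by (apply volterra_cont1; auto with cont).
    rewrite RInt_Rminus by auto with cont.
    rewrite (RInt_triangle_swap (f x) k (fun y => W y t) x) by (auto with cont; lra).
    rewrite <- RInt_Rminus by auto with cont.
    apply RInt_ext_le; [lra|]. intros; ring.
  - rewrite <- RInt_Rplus by auto with cont. apply RInt_ext_le; [lra|].
    intros y Hy. rewrite <- (proj1 k_goursat x y) by (unfold Tri; lra). ring.
Qed.

Lemma p1_eq_theta x : 0 <= x <= 1 -> p1 g k x = volt_minus k (theta g k l) x.
Proof.
  intros Hx. symmetry.
  exact (proj2 (kl_inverse (p1 g k) (fun y _ => cont1_cont_within _ _ y p1_cont)) x Hx).
Qed.

Lemma W_0 t : W 0 t = uh 0 t.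
Proof. unfold W, volt_plus. rewrite RInt_Rpoint. ring. Qed.

(* After differentiating [uh = (I - K) W] and integrating by parts, everything
   cancels except [(g x - k x 0 - p1 g k x) * uh 0 t], which is zero. *)
Lemma transport_residual x t : 0 < x < 1 -> 0 < t ->
  volt_minus k (fun y => Wt y t - Wx y t - theta g k l y * Y t) x = 0.
Proof.
  intros Hx Ht. pose proof Wt_cont. pose proof Wx_cont. pose proof theta_cont.
  transitivity (volt_minus k (fun y => Wt y t) x
    - (Wx x t - RInt (fun y => k x y * Wx y t) 0 x) - Y t * volt_minus k (theta g k l) x).
  { unfold volt_minus.
    rewrite (RInt_ext_le _ (fun y => (k x y * Wt y t - k x y * Wx y t)
                                     - Y t * (k x y * theta g k l y))) by (lra || (intros; ring)).
    rewrite !RInt_Rminus, RInt_Rscal by auto with cont. ring. }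
  rewrite <- uht_eq_Wt, <- p1_eq_theta, RInt_k_Wx, observer, uhx_eq_Wx, RInt_f_uh, W_0
    by (unfold Quad, I01, Rpos; lra).
  unfold p1. ring.
Qed.

(* [volt_plus l] is a left inverse of [volt_minus k]. *)
Lemma W_transport x t : 0 < x < 1 -> 0 < t -> Wt x t - Wx x t = theta g k l x * Y t.
Proof.
  intros Hx Ht. set (Z y := Wt y t - Wx y t - theta g k l y * Y t).
  assert (HZ : cont1 Z) by (pose proof Wt_cont; pose proof Wx_cont; pose proof theta_cont;
                            unfold Z; auto with cont).
  enough (Z x = 0) by (unfold Z in *; lra).
  rewrite <- (proj1 (kl_inverse Z (fun y _ => cont1_cont_within _ _ y HZ)) x)
    by (unfold I01; lra).
  unfold volt_plus, Z. rewrite transport_residual by lra.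
  rewrite (RInt_ext_le _ (fun _ => 0)) by (lra || (intros y Hy; rewrite transport_residual by lra; ring)).
  rewrite RInt_Rconst. ring.
Qed.

Lemma W_1 t : 0 <= t -> W 1 t = U t.
Proof.
  intros Ht. rewrite <- observer_boundary by exact Ht. rewrite uh_eq_W by lra.
  unfold volt_minus at 1.
  rewrite (RInt_ext_le _ (fun _ => 0)) by
    (lra || (intros y Hy; rewrite (proj2 k_goursat y) by (unfold I01; lra); ring)).
  rewrite RInt_Rconst. ring.
Qed.

(* Integrating the transport equation along the characteristic [x + s = t + z]
   from the boundary [x = 1] (reached at time [t + z - 1 >= 0]) down to [x = z]. *)
Lemma W_characteristic z t : 0 <= z <= 1 -> 1 <= t -> W z t = what (theta g k l) Y U z t.
Proof.
  intros Hz Ht. pose proof W_cont as HW. pose proof theta_cont as Hth.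
  unfold what. rewrite <- W_1 by lra.
  rewrite (RInt_of_is_derive_interior (fun s => W (t + z - s) s)); [| lra | | |].
  - replace (t + z - t) with z by ring. replace (t + z - (t + z - 1)) with 1 by ring. ring.
  - intros s _. apply (cont1_comp2 W); auto with cont.
  - intros s Hs. rewrite <- W_transport by lra.
    apply (is_derive_characteristic W (Wx (t + z - s) s) Wt (t + z) s s); [lra | | apply Wt_cont |].
    + intros x' t' _ Ht'. apply W_dt. apply Rabs_lt_between' in Ht'. lra.
    + apply W_dx; lra.
  - apply cont1_mult; [apply (cont1_comp (theta g k l)) | ]; auto with cont.
Qed.

Theorem observer_representation t x : 1 <= t -> 0 <= x <= 1 ->
  uh x t = volt_minus k (fun z => what (theta g k l) Y U z t) x.
Proof.
  intros Ht Hx. rewrite uh_eq_W by exact Hx.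
  apply volt_minus_congr; [lra|]. intros z Hz. apply W_characteristic; lra.
Qed.

End Transformed_observer.

(** * Back to the data on their domains *)

Lemma ext_tri_cont_C1 F F1 F2 : C1_2_with Tri F F1 F2 ->
  cont2 (ext_tri F) /\ cont2 (ext_tri F1) /\ cont2 (ext_tri F2).
Proof. intros H. repeat split; apply ext_tri_cont; intros x y Hxy; apply H, Hxy. Qed.

Lemma ext_quad_cont_C1 F F1 F2 : C1_2_with Quad F F1 F2 ->
  cont2 (ext_quad F) /\ cont2 (ext_quad F1) /\ cont2 (ext_quad F2).
Proof. intros H. repeat split; apply ext_quad_cont; intros x t Hxt; apply H, Hxt. Qed.

Lemma volt_minus_ext_tri k w x : I01 x -> volt_minus (ext_tri k) w x = volt_minus k w x.
Proof.
  intros Hx. unfold volt_minus, I01 in *. f_equal. apply RInt_ext_le; [lra|].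
  intros y Hy. rewrite ext_tri_eq by (unfold Tri; lra). reflexivity.
Qed.

Lemma volt_plus_ext_tri l w x : I01 x -> volt_plus (ext_tri l) w x = volt_plus l w x.
Proof.
  intros Hx. unfold volt_plus, I01 in *. f_equal. apply RInt_ext_le; [lra|].
  intros y Hy. rewrite ext_tri_eq by (unfold Tri; lra). reflexivity.
Qed.

Lemma inverse_kernel_ext_tri k l : inverse_kernel k l -> inverse_kernel (ext_tri k) (ext_tri l).
Proof.
  intros Hkl w Hw. destruct (Hkl w Hw) as [H1 H2]. split; intros x Hx.
  - rewrite volt_plus_ext_tri, <- (H1 x Hx) by exact Hx.
    apply volt_plus_congr; [apply Hx|]. intros y Hy. apply volt_minus_ext_tri. unfold I01 in *; lra.
  - rewrite volt_minus_ext_tri, <- (H2 x Hx) by exact Hx.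
    apply volt_minus_congr; [apply Hx|]. intros y Hy. apply volt_plus_ext_tri. unfold I01 in *; lra.
Qed.

Lemma goursat_ext_tri f k kx ky : goursat f k kx ky ->
  goursat (ext_tri f) (ext_tri k) (ext_tri kx) (ext_tri ky).
Proof.
  intros [Hpde Hbd]. split.
  - intros x y Hxy. rewrite !ext_tri_eq by exact Hxy. rewrite Hpde by exact Hxy.
    f_equal. unfold Tri in Hxy. apply RInt_ext_le; [lra|]. intros eta Heta.
    rewrite !ext_tri_eq by (unfold Tri; lra). reflexivity.
  - intros y Hy. rewrite ext_tri_eq by (unfold Tri, I01 in *; lra). now apply Hbd.
Qed.

Lemma p1_ext g k x : I01 x -> p1 (ext_unit g) (ext_tri k) x = p1 g k x.
Proof.
  intros Hx. unfold p1. rewrite ext_unit_eq, ext_tri_eq by (unfold Tri, I01 in *; lra).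
  reflexivity.
Qed.

Lemma theta_ext g k l x : I01 x -> theta (ext_unit g) (ext_tri k) (ext_tri l) x = theta g k l x.
Proof.
  intros Hx. unfold theta. rewrite volt_plus_ext_tri by exact Hx.
  apply volt_plus_congr; [apply Hx|]. intros y Hy. apply p1_ext. unfold I01 in *; lra.
Qed.

Lemma what_congr th th' Y Y' U z t : 0 <= z <= 1 ->
  (forall a, z <= a <= 1 -> th a = th' a) -> (forall s, t + z - 1 <= s <= t -> Y s = Y' s) ->
  what th Y U z t = what th' Y' U z t.
Proof.
  intros Hz Hth HY. unfold what. f_equal. apply RInt_ext_le; [lra|].
  intros s Hs. rewrite Hth, HY by lra. reflexivity.
Qed.

Lemma observer_ext f g k u uh uhx uht x t :
  (forall x t, Quad x t ->
     uht x t = uhx x t + g x * uh 0 t + RInt (fun y => f x y * uh y t) 0 x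
               + p1 g k x * (u 0 t - uh 0 t)) ->
  Quad x t ->
  ext_quad uht x t = ext_quad uhx x t + ext_unit g x * ext_quad uh 0 t
    + RInt (fun y => ext_tri f x y * ext_quad uh y t) 0 x
    + p1 (ext_unit g) (ext_tri k) x * (ext_quad u 0 t - ext_quad uh 0 t).
Proof.
  intros Hobs [Hx Ht]. unfold I01, Rpos in *.
  rewrite !ext_quad_eq, ext_unit_eq, p1_ext, Hobs by (unfold Quad, I01, Rpos; lra).
  f_equal. f_equal. apply RInt_ext_le; [lra|]. intros y Hy.
  rewrite ext_tri_eq, ext_quad_eq by (unfold Tri, Quad, I01, Rpos; lra). reflexivity.
Qed.

Lemma volt_minus_what_ext g k l u U x t : I01 x -> 1 <= t ->
  volt_minus k (fun z => what (theta g k l) (fun tau => u 0 tau) U z t) x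
  = volt_minus (ext_tri k)
      (fun z => what (theta (ext_unit g) (ext_tri k) (ext_tri l)) (ext_quad u 0) U z t) x.
Proof.
  intros Hx Ht. rewrite volt_minus_ext_tri by exact Hx. destruct Hx as [Hx0 Hx1].
  apply volt_minus_congr; [exact Hx0|]. intros z Hz.
  apply what_congr; [lra | |]; intros a Ha.
  - apply eq_sym, theta_ext. unfold I01; lra.
  - apply eq_sym, ext_quad_eq. unfold Quad, I01, Rpos; lra.
Qed.

Theorem theorem3
  (f : R -> R -> R) (g : R -> R)
  (k kx ky l : R -> R -> R)
  (U Ud u0 u0d uh0 uh0d : R -> R)
  (u ux ut uh uhx uht : R -> R -> R) :
  C1_2 Tri f -> C1_on I01 g ->
  C1_2_with Tri k kx ky -> goursat f k kx ky ->
  C1_2 Tri l -> inverse_kernel k l ->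
  C1_with Rpos U Ud -> C1_with I01 u0 u0d -> C1_with I01 uh0 uh0d ->
  (* compatibility conditions *)
  u0 1 = U 0 ->
  Ud 0 = u0d 1 + g 1 * u0 0 + RInt (fun y => f 1 y * u0 y) 0 1 ->
  uh0 1 = U 0 ->
  Ud 0 = uh0d 1 + g 1 * uh0 0 + RInt (fun y => f 1 y * uh0 y) 0 1
         + p1 g k 1 * (u0 0 - uh0 0) ->
  (* u : classical solution of the plant *)
  C1_2_with Quad u ux ut ->
  (forall x t, Quad x t ->
     ut x t = ux x t + g x * u 0 t + RInt (fun y => f x y * u y t) 0 x) ->
  (forall t, Rpos t -> u 1 t = U t) ->
  (forall x, I01 x -> u x 0 = u0 x) ->
  (* uh : classical solution of the observer (with Y(t) = u(0,t)) *)
  C1_2_with Quad uh uhx uht ->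
  (forall x t, Quad x t ->
     uht x t = uhx x t + g x * uh 0 t + RInt (fun y => f x y * uh y t) 0 x
               + p1 g k x * (u 0 t - uh 0 t)) ->
  (forall t, Rpos t -> uh 1 t = U t) ->
  (forall x, I01 x -> uh x 0 = uh0 x) ->
  forall t x, 1 <= t -> I01 x ->
    uh x t = volt_minus k (fun z => what (theta g k l) (fun tau => u 0 tau) U z t) x.
Proof.
  (* For t >= 1 the observer has forgotten its initial state: the plant equation,
     the initial data and the compatibility conditions only serve to guarantee
     classical solutions, and only the continuity of Y = u(0, .) is used. *)
  intros [f1 [f2 Hf]] [g' Hg] Hk Hgo [l1 [l2 Hl]] Hkl _ _ _ _ _ _ _ Hu _ _ _ Huh Hobs Hbd _
    t x Ht Hx.
  destruct (ext_tri_cont_C1 _ _ _ Hf) as [Cf _]. destruct (ext_tri_cont_C1 _ _ _ Hk) as [Ck [Ckx Cky]].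
  destruct (ext_tri_cont_C1 _ _ _ Hl) as [Cl [Cl1 _]]. destruct (ext_quad_cont_C1 _ _ _ Hu) as [Cu _].
  destruct (ext_quad_cont_C1 _ _ _ Huh) as [Cuh [Cuhx Cuht]].
  assert (Cg : cont1 (ext_unit g)) by (apply ext_unit_cont; intros y Hy; apply Hg, Hy).
  rewrite <- (ext_quad_eq uh x t) by (split; [exact Hx | unfold Rpos; lra]).
  rewrite volt_minus_what_ext by assumption.
  apply (observer_representation (ext_tri f) _ (ext_tri kx) (ext_tri ky) _ (ext_tri l1)
           _ (ext_quad uhx) (ext_quad uht)); try assumption.
  - exact (cont2_slice2 _ 0 Cu).
  - intros; now apply ext_tri_dx with (F2 := ky).
  - intros; now apply ext_tri_dy with (F1 := kx).
  - intros; now apply ext_tri_dx with (F2 := l2).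
  - intros; now apply ext_quad_dx with (F2 := uht).
  - intros; now apply ext_quad_dt with (F1 := uhx).
  - now apply goursat_ext_tri.
  - now apply inverse_kernel_ext_tri.
  - intros y s Hys. apply observer_ext; assumption.
  - intros s Hs. rewrite ext_quad_eq by (split; [unfold I01; lra | exact Hs]). now apply Hbd.
Qed.
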